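(* Consider the DSA algorithm described in the context, under conditions (a)–(c) on the weights and assuming every $f_{n,i}$ is differentiable and $\mu$-strongly convex with $L$-Lipschitz gradient. Then for any constant $\eta>0$ and every $t\ge0$, \begin{align*} \mathbb{E}\left[\|\mathbf{u}^{t+1}-\mathbf{u}^*\|_{\mathbf{G}}^2\mid\mathcal{F}^t\right]&\le\|\mathbf{u}^t-\mathbf{u}^*\|_{\mathbf{G}}^2-2\,\mathbb{E}\left[\|\mathbf{x}^{t+1}-\mathbf{x}^*\|_{\mathbf{I}+\mathbf{Z}-2\tilde{\mathbf{Z}}}^2\mid\mathcal{F}^t\right]+\frac{4\alpha L}{\eta}p^t\\ &\quad-\mathbb{E}\left[\|\mathbf{x}^{t+1}-\mathbf{x}^t\|_{\tilde{\mathbf{Z}}-2\alpha\eta\mathbf{I}}^2\mid\mathcal{F}^t\right]-\mathbb{E}\left[\|\mathbf{v}^{t+1}-\mathbf{v}^t\|^2\mid\mathcal{F}^t\right]\\ &\quad-\left(\frac{4\alpha\mu}{L}-\frac{2\alpha(2L-\mu)}{\eta}\right)\left(f(\mathbf{x}^{t})-f(\mathbf{x}^* )-\nabla f(\mathbf{x}^* )^T(\mathbf{x}^{t}-\mathbf{x}^* )\right). \end{align*}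
   Context: Problem: a connected network of $N$ nodes; node $n$ holds $q_n$ functions $f_{n,i}:\mathbb{R}^p\to\mathbb{R}$, each differentiable, $\mu$-strongly convex, with $L$-Lipschitz gradient; $f_n:=\frac1{q_n}\sum_i f_{n,i}$, $\tilde{\mathbf{x}}^*:=\arg\min_{\mathbf{x}}\sum_n f_n(\mathbf{x})$. For $\mathbf{x}=[\mathbf{x}_1;\dots;\mathbf{x}_N]\in\mathbb{R}^{Np}$, $f(\mathbf{x}):=\sum_n f_n(\mathbf{x}_n)$, $\mathbf{x}^*:=[\tilde{\mathbf{x}}^*;\dots;\tilde{\mathbf{x}}^*]$. Weights: $\mathbf{W},\tilde{\mathbf{W}}\in\mathbb{R}^{N\times N}$ with entries nonzero only for $m=n$ or $m$ a neighbor of $n$, satisfying (a) symmetry; (b) $\mathrm{null}(\mathbf{I}-\tilde{\mathbf{W}})\supseteq\mathrm{span}(\mathbf{1})$, $\mathrm{null}(\mathbf{I}-\mathbf{W})=\mathrm{span}(\mathbf{1})$, $\mathrm{null}(\tilde{\mathbf{W}}-\mathbf{W})=\mathrm{span}(\mathbf{1})$; (c) $\mathbf{W}\preceq\tilde{\mathbf{W}}\preceq(\mathbf{I}+\mathbf{W})/2$, $\tilde{\mathbf{W}}\succ0$. $\mathbf{Z}:=\mathbf{W}\otimes\mathbf{I}_p$, $\tilde{\mathbf{Z}}:=\tilde{\mathbf{W}}\otimes\mathbf{I}_p$, $\mathbf{U}:=(\tilde{\mathbf{Z}}-\mathbf{Z})^{1/2}$. DSA: stepsize $\alpha>0$, initial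 $\mathbf{x}_n^0$, $\mathbf{y}_{n,i}^0=\mathbf{x}_n^0$. At each $t\ge0$ node $n$ draws $i_n^t$ uniformly from $\{1,\dots,q_n\}$ independently of the past, sets $\hat{\mathbf{g}}_n^t:=\nabla f_{n,i_n^t}(\mathbf{x}_n^t)-\nabla f_{n,i_n^t}(\mathbf{y}_{n,i_n^t}^t)+\frac1{q_n}\sum_{i}\nabla f_{n,i}(\mathbf{y}_{n,i}^t)$, and $\mathbf{y}_{n,i}^{t+1}=\mathbf{x}_n^t$ if $i=i_n^t$, else $\mathbf{y}_{n,i}^{t+1}=\mathbf{y}_{n,i}^t$. With $\hat{\mathbf{g}}^t:=[\hat{\mathbf{g}}_1^t;\dots;\hat{\mathbf{g}}_N^t]$: $\mathbf{x}^1=\mathbf{Z}\mathbf{x}^0-\alpha\hat{\mathbf{g}}^0$, $\mathbf{x}^{t+1}=(\mathbf{I}+\mathbf{Z})\mathbf{x}^t-\tilde{\mathbf{Z}}\mathbf{x}^{t-1}-\alpha[\hat{\mathbf{g}}^t-\hat{\mathbf{g}}^{t-1}]$ for $t\ge1$. Dual variables $\mathbf{v}^t:=\sum_{s=0}^t\mathbf{U}\mathbf{x}^s$; $\mathbf{v}^*$ is the vector in the column space of $\mathbf{U}$ with $\alpha\nabla f(\mathbf{x}^* )+\mathbf{U}\mathbf{v}^*=\mathbf{0}$. Set $\mathbf{u}^t:=[\mathbf{x}^t;\mathbf{v}^t]$, $\mathbf{u}^*:=[\mathbf{x}^*;\mathbf{v}^*]$, $\mathbf{G}:=\mathrm{diag}(\tilde{\mathbf{Z}},\mathbf{I})\in\mathbb{R}^{2Np\times2Np}$.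 For a symmetric matrix $\mathbf{A}$, $\|\mathbf{z}\|_{\mathbf{A}}^2:=\mathbf{z}^T\mathbf{A}\mathbf{z}$. $\mathcal{F}^t$ is the sigma-algebra of the history up to time $t$. Define $$p^t:=\sum_{n=1}^N\frac1{q_n}\sum_{i=1}^{q_n}\left(f_{n,i}(\mathbf{y}_{n,i}^t)-f_{n,i}(\tilde{\mathbf{x}}^* )-\nabla f_{n,i}(\tilde{\mathbf{x}}^* )^T(\mathbf{y}_{n,i}^t-\tilde{\mathbf{x}}^* )\right).$$ *)

From mathcomp Require Import all_boot all_algebra.
From mathcomp Require Import all_classical all_reals all_analysis.
From mathcomp.real_closed Require Export mxtens.
Import GRing.Theory Num.Theory numFieldNormedType.Exports.
Set Implicit Arguments. Unset Strict Implicit. Unset Printing Implicit Defensive.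
Local Open Scope ring_scope.

Definition qform (R : pzRingType) (k : nat) (A : 'M[R]_k) (z : 'rV[R]_k) : R :=
  (z *m A *m z^T) 0 0.

Definition dotv (R : pzRingType) (k : nat) (u v : 'rV[R]_k) : R := (u *m v^T) 0 0.
Definition enorm (R : rcfType) (k : nat) (u : 'rV[R]_k) : R := Num.sqrt (dotv u u).

(* R^{Np} is 'rV_(N*p); the block x_n (n-th node's copy) uses the index
   convention of the Kronecker product [tensmx] (mxtens_index (n,k)). *)
Definition blk (R : Type) (N p : nat) (x : 'rV[R]_(N * p)) (n : 'I_N) : 'rV[R]_p :=
  \row_k x 0 (mxtens_index (n, k)).
Definition stack (R : Type) (N p : nat) (b : 'I_N -> 'rV[R]_p) : 'rV[R]_(N * p) :=
  \row_a b (mxtens_unindex a).1 0 (mxtens_unindex a).2.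
Definition nullsp (R : pzRingType) (k : nat) (A : 'M[R]_k) (z : 'cV[R]_k) : Prop :=
  A *m z = 0.
Definition spanOne (R : pzRingType) (k : nat) (z : 'cV[R]_k) : Prop :=
  exists c : R, z = c *: const_mx 1.
Definition psd_le (R : numDomainType) (k : nat) (A B : 'M[R]_k) : Prop :=
  forall z : 'rV[R]_k, qform A z <= qform B z.
Definition pos_def (R : numDomainType) (k : nat) (A : 'M[R]_k) : Prop :=
  forall z : 'rV[R]_k, z != 0 -> 0 < qform A z.

Section Fun.
Variables (R : realType) (p : nat).

Definition is_gradient (f : 'rV[R]_p -> R) (g : 'rV[R]_p -> 'rV[R]_p) : Prop :=
  forall x : 'rV[R]_p, differentiable f x /\ (forall h : 'rV[R]_p, 'd f x h = dotv (g x) h).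

Definition eucl_strongly_convex (mu : R) (f : 'rV[R]_p -> R) : Prop :=
  forall (x y : 'rV[R]_p) (th : R), 0 <= th <= 1 ->
    f (th *: x + (1 - th) *: y)
      <= th * f x + (1 - th) * f y - mu / 2 * th * (1 - th) * (enorm (x - y)) ^+ 2.

Definition eucl_lipschitz (L : R) (g : 'rV[R]_p -> 'rV[R]_p) : Prop :=
  forall x y : 'rV[R]_p, enorm (g x - g y) <= L * enorm (x - y).
End Fun.

Section DSA.
Variables (R : realType) (N p : nat) (q : 'I_N -> nat).
Variable gf : forall n : 'I_N, 'I_(q n) -> 'rV[R]_p -> 'rV[R]_p.
Variables (W Wt : 'M[R]_N) (alpha : R) (x0 : 'rV[R]_(N * p)).

(* one draw (i_1^t, ..., i_N^t) *)
Definition choice_t := {dffun forall n : 'I_N, 'I_(q n)}.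

Definition Zmat : 'M[R]_(N * p) := W *t (1%:M : 'M[R]_p).
Definition Ztmat : 'M[R]_(N * p) := Wt *t (1%:M : 'M[R]_p).

Definition table := forall n : 'I_N, 'I_(q n) -> 'rV[R]_p.

Definition ghat (y : table) (x : 'rV[R]_(N * p)) (c : choice_t) : 'rV[R]_(N * p) :=
  stack (fun n => gf (c n) (blk x n) - gf (c n) (y n (c n))
                  + (q n)%:R^-1 *: \sum_(i < q n) gf i (y n i)).

Definition yupdate (y : table) (x : 'rV[R]_(N * p)) (c : choice_t) : table :=
  fun n i => if i == c n then blk x n else y n i.

Record dsa_state := DsaState {
  st_x : 'rV[R]_(N * p);
  st_xprev : 'rV[R]_(N * p);  (* x^{t-1} (junk at t = 0) *)
  st_gprev : 'rV[R]_(N * p);  (* \hat g^{t-1} (junk at t = 0) *)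
  st_y : table
}.

Variable omega : nat -> choice_t.

Fixpoint dsa (t : nat) : dsa_state :=
  match t with
  | 0 => DsaState x0 x0 0 (fun n _ => blk x0 n)
  | s.+1 =>
      let st := dsa s in
      let g := ghat (st_y st) (st_x st) (omega s) in
      let xn := if s is 0 then st_x st *m Zmat - alpha *: g
                else st_x st *m (1%:M + Zmat) - st_xprev st *m Ztmat
                     - alpha *: (g - st_gprev st) in
      DsaState xn (st_x st) g (yupdate (st_y st) (st_x st) (omega s))
  end.

Definition dsa_x (t : nat) := st_x (dsa t).
Definition dsa_y (t : nat) := st_y (dsa t).
End DSA.

Definition dsa_v (R : realType) N p q gf W Wt alpha x0 (U : 'M[R]_(N * p))
  (omega : nat -> @choice_t N q) (t : nat) : 'rV[R]_(N * p) :=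
  \sum_(s < t.+1) @dsa_x R N p q gf W Wt alpha x0 omega s *m U.

(* Conditional expectation given F^t = sigma(omega 0, ..., omega (t-1)) of a
   random quantity X depending on the sample path: since the draws
   omega t are independent and uniform on choice_t, it is the average over
   the draw at time t (with the past fixed), for X depending only on
   omega 0 .. omega t. *)
Definition condE (R : realType) N (q : 'I_N -> nat) (t : nat)
  (X : (nat -> @choice_t N q) -> R) (omega : nat -> @choice_t N q) : R :=
  (#|{: @choice_t N q}|%:R)^-1 *
    \sum_(c : @choice_t N q) X (fun s => if s == t then c else omega s).

Definition uvec (R : Type) k (x v : 'rV[R]_k) : 'rV[R]_(k + k) := row_mx x v.
Definition Gmat (R : pzRingType) k (Zt : 'M[R]_k) : 'M[R]_(k + k) :=
  block_mx Zt 0 0 1%:M.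

Definition f_loc (R : realType) N p (q : 'I_N -> nat)
  (f : forall n : 'I_N, 'I_(q n) -> 'rV[R]_p -> R) (n : 'I_N) (z : 'rV[R]_p) : R :=
  (q n)%:R^-1 * \sum_(i < q n) f n i z.
Definition F_glob (R : realType) N p (q : 'I_N -> nat)
  (f : forall n : 'I_N, 'I_(q n) -> 'rV[R]_p -> R) (x : 'rV[R]_(N * p)) : R :=
  \sum_(n < N) f_loc f n (blk x n).
Definition gradF_glob (R : realType) N p (q : 'I_N -> nat)
  (gf : forall n : 'I_N, 'I_(q n) -> 'rV[R]_p -> 'rV[R]_p) (x : 'rV[R]_(N * p)) :
  'rV[R]_(N * p) :=
  stack (fun n => (q n)%:R^-1 *: \sum_(i < q n) gf n i (blk x n)).

Definition pterm (R : realType) N p (q : 'I_N -> nat)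
  (f : forall n : 'I_N, 'I_(q n) -> 'rV[R]_p -> R)
  (gf : forall n : 'I_N, 'I_(q n) -> 'rV[R]_p -> 'rV[R]_p)
  (y : forall n : 'I_N, 'I_(q n) -> 'rV[R]_p) (xs : 'rV[R]_p) : R :=
  \sum_(n < N) (q n)%:R^-1 *
    \sum_(i < q n) (f n i (y n i) - f n i xs - dotv (gf n i xs) (y n i - xs)).

From mathcomp Require Import all_boot all_algebra.
From mathcomp Require Import all_classical all_reals all_analysis.
From mathcomp.real_closed Require Import mxtens.
From mathcomp Require Import ring lra.
Import order.Order.TTheory GRing.Theory Num.Theory numFieldNormedType.Exports.
Local Open Scope ring_scope.

Set Implicit Arguments.
Unset Strict Implicit.
Unset Printing Implicit Defensive.

(* Fix the past and average over the draw at time t.  For each draw, one DSA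
   step is a primal-dual step [x' = x Zt - v U - alpha g], [v' = v + x' U]
   whose exact-gradient fixed point is [(xstar, vstar)]; expanding the G-norm and
   completing the square in the gradient error [g - grad f(xstar)] gives a
   deterministic bound.  Averaged over the uniform draw, this error is at
   every node that of a SAGA estimator: by strong convexity and smoothness its
   mean inner product with [x - xstar] is at least [2 mu / L] times the Bregman
   divergence of f at [x^t], and by co-coercivity of the gradients and a
   variance decomposition its mean square is at most [4 L p^t] plus
   [2 (2 L - mu)] times that divergence. *)

Section InnerProduct.
Variables (R : realType) (k : nat).
Implicit Types (u v w : 'rV[R]_k) (A B : 'M[R]_k).

Definition normsq u := dotv u u.

Lemma dotvE u v : dotv u v = \sum_j u 0 j * v 0 j.
Proof. by rewrite /dotv mxE; apply: eq_bigr => j _; rewrite mxE. Qed.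

Lemma dotvC u v : dotv u v = dotv v u.
Proof. by rewrite !dotvE; apply: eq_bigr => j _; rewrite mulrC. Qed.

Lemma dotvDl u v w : dotv (u + v) w = dotv u w + dotv v w.
Proof. by rewrite !dotvE -big_split; apply: eq_bigr => j _; rewrite !mxE mulrDl. Qed.

Lemma dotvZl a u v : dotv (a *: u) v = a * dotv u v.
Proof. by rewrite !dotvE mulr_sumr; apply: eq_bigr => j _; rewrite !mxE mulrA. Qed.

Lemma dotvDr u v w : dotv w (u + v) = dotv w u + dotv w v.
Proof. by rewrite dotvC dotvDl !(dotvC w). Qed.

Lemma dotvZr a u v : dotv v (a *: u) = a * dotv v u.
Proof. by rewrite dotvC dotvZl dotvC. Qed.

Lemma dotvNl u v : dotv (- u) v = - dotv u v.
Proof. by rewrite -scaleN1r dotvZl mulN1r. Qed.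

Lemma dotvNr u v : dotv v (- u) = - dotv v u.
Proof. by rewrite dotvC dotvNl dotvC. Qed.

Lemma dotvBl u v w : dotv (u - v) w = dotv u w - dotv v w.
Proof. by rewrite dotvDl dotvNl. Qed.

Lemma dotvBr u v w : dotv w (u - v) = dotv w u - dotv w v.
Proof. by rewrite dotvDr dotvNr. Qed.

Lemma dotv0l v : dotv 0 v = 0.
Proof. by rewrite -(scale0r 0) dotvZl mul0r. Qed.

Lemma dotv_suml I (r : seq I) (P : pred I) (F : I -> 'rV[R]_k) v :
  dotv (\sum_(i <- r | P i) F i) v = \sum_(i <- r | P i) dotv (F i) v.
Proof. by apply: (big_morph (fun u => dotv u v)) => [x y|]; rewrite ?dotvDl ?dotv0l. Qed.

Lemma dotv_sumr I (r : seq I) (P : pred I) (F : I -> 'rV[R]_k) v :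
  dotv v (\sum_(i <- r | P i) F i) = \sum_(i <- r | P i) dotv v (F i).
Proof. by rewrite dotvC dotv_suml; apply: eq_bigr => i _; rewrite dotvC. Qed.

Lemma dotv_mulmxr A u v : dotv u (v *m A) = dotv (u *m A^T) v.
Proof. by rewrite /dotv trmx_mul mulmxA. Qed.

Lemma dotv_mulmx_sym A u v : A^T = A -> dotv (u *m A) v = dotv (v *m A) u.
Proof. by move=> AT; rewrite dotvC dotv_mulmxr AT. Qed.

Lemma normsq_ge0 u : 0 <= normsq u.
Proof. by rewrite /normsq dotvE sumr_ge0 // => j _; rewrite -expr2 sqr_ge0. Qed.

Lemma normsq_eq0 u : normsq u = 0 -> u = 0.
Proof.
rewrite /normsq dotvE => /eqP; rewrite psumr_eq0 => [/allP u0|j _]; last first.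
  by rewrite -expr2 sqr_ge0.
apply/rowP => j; rewrite mxE; have := u0 j (mem_index_enum j).
by rewrite -expr2 sqrf_eq0 => /eqP.
Qed.

Lemma normsqD u v : normsq (u + v) = normsq u + 2 * dotv u v + normsq v.
Proof. rewrite /normsq dotvDl !dotvDr (dotvC v u); ring. Qed.

Lemma normsqN u : normsq (- u) = normsq u.
Proof. by rewrite /normsq dotvNl dotvNr opprK. Qed.

Lemma normsqB u v : normsq (u - v) = normsq u - 2 * dotv u v + normsq v.
Proof. by rewrite normsqD normsqN dotvNr mulrN. Qed.

Lemma normsqZ a u : normsq (a *: u) = a ^+ 2 * normsq u.
Proof. by rewrite /normsq dotvZl dotvZr mulrA expr2. Qed.

Lemma normsqB_le u v : normsq (u - v) <= 2 * normsq u + 2 * normsq v.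
Proof. have := normsq_ge0 (u + v); rewrite normsqB normsqD; lra. Qed.

Lemma enorm_sqr u : enorm u ^+ 2 = normsq u.
Proof. by rewrite /enorm sqr_sqrtr // normsq_ge0. Qed.

Lemma enorm_ge0 u : 0 <= enorm u.
Proof. exact: sqrtr_ge0. Qed.

Lemma dotv_young u v s : 2 * s * dotv u v <= normsq u + s ^+ 2 * normsq v.
Proof. have := normsq_ge0 (u - s *: v); rewrite normsqB dotvZr normsqZ; lra. Qed.

Lemma qformE A u : qform A u = dotv (u *m A) u.
Proof. by []. Qed.

Lemma qform1 u : qform 1%:M u = normsq u.
Proof. by rewrite qformE mulmx1. Qed.

Lemma qformD A B u : qform (A + B) u = qform A u + qform B u.
Proof. by rewrite !qformE mulmxDr dotvDl. Qed.

Lemma qformB A B u : qform (A - B) u = qform A u - qform B u.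
Proof. by rewrite !qformE mulmxBr dotvBl. Qed.

Lemma qformZ a A u : qform (a *: A) u = a * qform A u.
Proof. by rewrite !qformE -scalemxAr dotvZl. Qed.

Lemma qform_subr A u v : A^T = A ->
  qform A (u - v) = qform A u - 2 * dotv (u *m A) v + qform A v.
Proof.
move=> AT; rewrite !qformE !mulmxBl !dotvBl !dotvBr (dotv_mulmx_sym v u AT); ring.
Qed.

Lemma normsq_mulmx_sqrt U Q u : U^T = U -> U *m U = Q -> normsq (u *m U) = qform Q u.
Proof. by move=> UT UU; rewrite /normsq dotv_mulmxr UT -mulmxA UU. Qed.

End InnerProduct.

Section Bregman.
Local Open Scope classical_set_scope.
Variables (R : realType) (p : nat).
Implicit Types (h : 'rV[R]_p -> R) (g : 'rV[R]_p -> 'rV[R]_p) (x y v : 'rV[R]_p).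

Definition bregman h g x y := h x - h y - dotv (g y) (x - y).

Lemma dotv_grad_bregman h g x y :
  dotv (x - y) (g x - g y) = bregman h g x y + bregman h g y x.
Proof. by rewrite /bregman -(opprB x y) dotvNr dotvBr !(dotvC (x - y)); ring. Qed.

Lemma strongly_convex_bregman_ge h g mu x y :
  is_gradient h g -> eucl_strongly_convex mu h ->
  mu / 2 * normsq (x - y) <= bregman h g x y.
Proof.
move=> hg hc; set v := x - y; set K := mu / 2 * normsq v.
have [dh dhE] := hg y.
have Dv : 'D_v h y = dotv (g y) v by rewrite deriveE // dhE.
(* The secant slopes [(h (y + th v) - h y) / th - th K] converge to the
   directional derivative and are, by strong convexity, at most [h x - h y - K]. *)
pose slope th := th^-1 *: ((h \o shift y) (th *: v) - h y) - th * K.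
have : slope @ 0^'+ --> 'D_v h y - 0 * K.
  apply: cvgB; first exact/cvg_dnbhs_at_right/(diff_derivable dh).
  by apply: cvgM; [exact/cvg_at_right_filter/cvg_id | exact: cvg_cst].
rewrite mul0r subr0 Dv => slope_cvg.
suff : dotv (g y) v <= h x - h y - K by rewrite /bregman -/v; lra.
apply: (cvgr_to_le slope_cvg); near=> th.
have th0 : 0 < th by near: th; exact: nbhs_right_gt.
have th1 : th <= 1 by near: th; exact: nbhs_right_le.
have := hc x y th; rewrite th1 ltW //= => /(_ isT).
have -> : th *: x + (1 - th) *: y = th *: v + y.
  by apply/rowP => j; rewrite !mxE; ring.
rewrite enorm_sqr -/v /slope /= => hcth.
rewrite -[_ *: _]/(th^-1 * (h (th *: v + y) - h y)) lerBlDr mulrC ler_pdivrMr //.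
rewrite /K; nra.
Unshelve. all: by end_near.
Qed.
End Bregman.

Section Smoothness.
Variables (R : realType) (p : nat).

Lemma dotv_le_normsq (a v : 'rV[R]_p) s : 0 < s ->
  normsq a <= s ^+ 2 * normsq v -> dotv a v <= s * normsq v.
Proof.
move=> s0 aS; have young := dotv_young a v s.
suff : 2 * s * dotv a v <= 2 * s * (s * normsq v) by rewrite ler_pM2l ?mulr_gt0.
lra.
Qed.

Lemma normsq_le_lipschitz L (a b : 'rV[R]_p) : 0 <= L ->
  enorm a <= L * enorm b -> normsq a <= L ^+ 2 * normsq b.
Proof.
move=> L0 ab; rewrite -!enorm_sqr.
have := enorm_ge0 a; have := enorm_ge0 b; nra.
Qed.

Lemma sum_succ_natr m : \sum_(0 <= j < m) (j.+1)%:R = m%:R * (m%:R + 1) / 2 :> R.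
Proof.
elim: m => [|m IH]; first by rewrite big_nil !mul0r.
by rewrite big_nat_recr //= IH -natr1 -[(m.+1)%:R]natr1; field.
Qed.

Lemma le_of_le_add_inv_nat (a b c : R) : 0 <= c ->
  (forall m : nat, a <= b + c / (m.+1)%:R) -> a <= b.
Proof.
move=> c0 abc; apply/ler_addgt0Pr => e e0.
have [m cm] : exists m : nat, c / e < m.+1%:R.
  by exists (Num.bound (c / e)); rewrite -natr1; have := archi_boundP (divr_ge0 c0 (ltW e0)); lra.
apply: (le_trans (abc m)); rewrite lerD2l ler_pdivrMr ?ltr0n //.
by move: cm; rewrite ltr_pdivrMr // mulrC => /ltW.
Qed.

Variables (h : 'rV[R]_p -> R) (g : 'rV[R]_p -> 'rV[R]_p) (L : R).
Hypotheses (L0 : 0 < L) (h_convex : forall x y, 0 <= bregman h g x y)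
  (g_lip : eucl_lipschitz L g).

Lemma lipschitz_grad_increment_le y v (j m : nat) : (0 < m)%N ->
  h (y + (j.+1%:R / m%:R) *: v) - h (y + (j%:R / m%:R) *: v)
    <= m%:R^-1 * (L * (j.+1%:R / m%:R) * normsq v + dotv (g y) v).
Proof.
move=> m0; pose xj (i : nat) := y + (i%:R / m%:R) *: v.
rewrite -/(xj j) -/(xj j.+1); have mR : 0 < (m%:R : R) by rewrite ltr0n.
set s := L * (j.+1%:R / m%:R).
have s0 : 0 < s by rewrite mulr_gt0 // divr_gt0 ?ltr0n.
have := h_convex (xj j) (xj j.+1); rewrite /bregman.
have -> : xj j - xj j.+1 = - (m%:R^-1 *: v).
  by apply/rowP => i; rewrite /xj !mxE -natr1; field; rewrite lt0r_neq0.
rewrite dotvNr dotvZr => conv.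
have step : xj j.+1 - y = (j.+1%:R / m%:R) *: v by rewrite /xj addrC addKr.
have := g_lip (xj j.+1) y; rewrite step.
move=> /(normsq_le_lipschitz (ltW L0)); rewrite normsqZ.
rewrite mulrA -exprMn -/s => /(dotv_le_normsq s0) gdiff.
have : dotv (g (xj j.+1)) v <= s * normsq v + dotv (g y) v.
  by move: gdiff; rewrite dotvBl; lra.
rewrite -(ler_pM2l (_ : 0 < m%:R^-1)) ?invr_gt0 //; lra.
Qed.

Lemma bregman_le_lipschitz y v : bregman h g (y + v) y <= L / 2 * normsq v.
Proof.
rewrite /bregman [y + v - y]addrC addKr.
apply: (@le_of_le_add_inv_nat _ _ (L / 2 * normsq v)).
  by rewrite mulr_ge0 ?normsq_ge0 // divr_ge0 // ltW.
move=> k; set m := k.+1.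
have m0 : (m%:R : R) != 0 by rewrite pnatr_eq0.
pose xj (i : nat) := y + (i%:R / m%:R) *: v.
have -> : h (y + v) - h y = \sum_(0 <= j < m) (h (xj j.+1) - h (xj j)).
  by rewrite telescope_sumr // /xj mul0r scale0r addr0 divff // scale1r.
have incr_le : \sum_(0 <= j < m) (h (xj j.+1) - h (xj j)) <= \sum_(0 <= j < m)
    m%:R^-1 * (L * (j.+1%:R / m%:R) * normsq v + dotv (g y) v).
  by apply: ler_sum => j _; exact: lipschitz_grad_increment_le.
suff sumE : \sum_(0 <= j < m) m%:R^-1 * (L * (j.+1%:R / m%:R) * normsq v + dotv (g y) v)
    = L / 2 * normsq v + L / 2 * normsq v / m%:R + dotv (g y) v.
  by rewrite sumE in incr_le; lra.
rewrite -mulr_sumr big_split /= sumr_const_nat subn0 -[dotv (g y) v *+ m]mulr_natr.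
rewrite (eq_bigr (fun j => j.+1%:R * (L / m%:R * normsq v))); last first.
  by move=> j _; ring.
by rewrite -mulr_suml sum_succ_natr; field.
Qed.

End Smoothness.

Section StronglyConvexSmooth.
Variables (R : realType) (p : nat).
Variables (h : 'rV[R]_p -> R) (g : 'rV[R]_p -> 'rV[R]_p) (mu L : R).
Hypotheses (mu0 : 0 < mu) (L0 : 0 < L) (hg : is_gradient h g)
  (hc : eucl_strongly_convex mu h) (g_lip : eucl_lipschitz L g).

Lemma bregman_ge0 x y : 0 <= bregman h g x y.
Proof.
apply: le_trans (strongly_convex_bregman_ge x y hg hc).
by rewrite mulr_ge0 ?normsq_ge0 // divr_ge0 // ltW.
Qed.

Lemma bregman_le_smooth x y : bregman h g x y <= L / 2 * normsq (x - y).
Proof. by rewrite -{1}(subrK y x) addrC bregman_le_lipschitz // => ??; exact: bregman_ge0. Qed.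

(* Cocoercivity: evaluate the descent lemma at the gradient step [x - g x / L]
   against the convexity lower bound at [y]. *)
Lemma normsq_grad_le_bregman x y : normsq (g x - g y) <= 2 * L * bregman h g x y.
Proof.
set r := g x - g y; have Lneq0 : L != 0 by rewrite lt0r_neq0.
set z := x - L^-1 *: r.
have lower := bregman_ge0 z y; have upper := bregman_le_smooth z x.
have zx : z - x = - (L^-1 *: r) by rewrite /z addrC addKr.
have zy : z - y = (x - y) - L^-1 *: r by rewrite /z addrAC.
rewrite /bregman zx dotvNr dotvZr normsqN normsqZ in upper.
rewrite /bregman zy dotvBr dotvZr in lower.
have rr : L^-1 * dotv (g x) r - L^-1 * dotv (g y) r = L^-1 * normsq r.
  by rewrite -mulrBr -dotvBl.
suff : normsq r / (2 * L) <= bregman h g x y.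
  by rewrite ler_pdivrMr ?mulr_gt0 // mulrC.
have -> : normsq r / (2 * L) = L^-1 * normsq r - L / 2 * (L^-1 ^+ 2 * normsq r).
  by field.
rewrite /bregman; lra.
Qed.

End StronglyConvexSmooth.

Section Mean.
Variables (R : realType) (T : finType).
Implicit Types (F G : T -> R).

Definition mean F := #|T|%:R^-1 * \sum_i F i.
Definition vmean k (z : T -> 'rV[R]_k) := #|T|%:R^-1 *: \sum_i z i.

Lemma eq_mean F G : (forall i, F i = G i) -> mean F = mean G.
Proof. by move=> FG; rewrite /mean (eq_bigr _ (fun i _ => FG i)). Qed.

Lemma mean_ler F G : (forall i, F i <= G i) -> mean F <= mean G.
Proof. by move=> FG; rewrite ler_wpM2l ?invr_ge0 ?ler0n // ler_sum. Qed.

Lemma meanD F G : mean (fun i => F i + G i) = mean F + mean G.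
Proof. by rewrite /mean big_split mulrDr. Qed.

Lemma meanB F G : mean (fun i => F i - G i) = mean F - mean G.
Proof. by rewrite /mean sumrB mulrBr. Qed.

Lemma meanZ a F : mean (fun i => a * F i) = a * mean F.
Proof. by rewrite /mean -mulr_sumr mulrCA. Qed.

Lemma mean_dotvr k (z : T -> 'rV[R]_k) e : mean (fun i => dotv e (z i)) = dotv e (vmean z).
Proof. by rewrite /mean dotvZr dotv_sumr. Qed.

Lemma mean_dotvl k (z : T -> 'rV[R]_k) e : mean (fun i => dotv (z i) e) = dotv (vmean z) e.
Proof. by rewrite /mean dotvZl dotv_suml. Qed.

Lemma vmeanB k (z w : T -> 'rV[R]_k) : vmean (fun i => z i - w i) = vmean z - vmean w.
Proof. by rewrite /vmean sumrB scalerBr. Qed.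

Hypothesis T_gt0 : (0 < #|T|)%N.

Lemma card_neq0 : (#|T|%:R : R) != 0.
Proof. by rewrite pnatr_eq0 -lt0n. Qed.

Lemma mean_cst a : mean (fun=> a) = a.
Proof. by rewrite /mean sumr_const -[a *+ _]mulr_natl mulKf ?card_neq0. Qed.

Lemma vmean_cst k (c : 'rV[R]_k) : vmean (fun=> c) = c.
Proof. by rewrite /vmean sumr_const -[c *+ _]scaler_nat scalerA mulVf ?card_neq0 ?scale1r. Qed.

Lemma vmean_sub_vmean k (z : T -> 'rV[R]_k) : vmean (fun i => z i - vmean z) = 0.
Proof. by rewrite vmeanB vmean_cst subrr. Qed.

Lemma mean_normsqDr k (z : T -> 'rV[R]_k) c :
  mean (fun i => normsq (z i + c)) = mean (fun i => normsq (z i)) + 2 * dotv (vmean z) c + normsq c.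
Proof.
by rewrite (eq_mean (fun i => normsqD (z i) c)) !meanD meanZ mean_dotvl mean_cst.
Qed.

Lemma mean_normsq_sub_vmean k (z : T -> 'rV[R]_k) :
  mean (fun i => normsq (z i - vmean z)) = mean (fun i => normsq (z i)) - normsq (vmean z).
Proof. rewrite mean_normsqDr dotvNr normsqN /normsq; ring. Qed.

End Mean.

Section SagaNode.
Variables (R : realType) (p : nat) (T : finType).
Hypothesis T_gt0 : (0 < #|T|)%N.
Variables (h : T -> 'rV[R]_p -> R) (g : T -> 'rV[R]_p -> 'rV[R]_p) (mu L : R).
Hypotheses (mu0 : 0 < mu) (L0 : 0 < L) (hg : forall i, is_gradient (h i) (g i))
  (hc : forall i, eucl_strongly_convex mu (h i)) (g_lip : forall i, eucl_lipschitz L (g i)).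
Variables (x xs : 'rV[R]_p) (y : T -> 'rV[R]_p).

(* [hat g - grad h(xs)] for the SAGA estimate [hat g] of the gradient of the
   mean of the [h i] at [x], built from the table [y]. *)
Definition saga_dev i :=
  g i x - g i (y i) + vmean (fun j => g j (y j)) - vmean (fun j => g j xs).

Let Dx := mean (fun i => bregman (h i) (g i) x xs).
Let Dy := mean (fun i => bregman (h i) (g i) (y i) xs).

Lemma mean_dotv_saga_dev_ge : 2 * mu / L * Dx <= mean (fun i => dotv (x - xs) (saga_dev i)).
Proof.
have devE i : dotv (x - xs) (saga_dev i) = dotv (x - xs) (g i x - g i xs)
    + (dotv (x - xs) (vmean (fun j => g j (y j))) - dotv (x - xs) (g i (y i)))
    - (dotv (x - xs) (vmean (fun j => g j xs)) - dotv (x - xs) (g i xs)).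
  by rewrite /saga_dev !dotvBr !dotvDr dotvNr; lra.
rewrite (eq_mean devE) meanB meanD !meanB !mean_cst // !mean_dotvr !subrr addr0 subr0.
rewrite /Dx -meanZ -mean_dotvr; apply: mean_ler => i.
rewrite (dotv_grad_bregman (h i)).
have Dx_ge := strongly_convex_bregman_ge x xs (hg i) (hc i).
have Dxs_ge := strongly_convex_bregman_ge xs x (hg i) (hc i).
rewrite -normsqN opprB in Dxs_ge.
have : 2 * mu / L * bregman (h i) (g i) x xs <= mu * normsq (x - xs).
  have -> : mu * normsq (x - xs) = 2 * mu / L * (L / 2 * normsq (x - xs)).
    by field; rewrite lt0r_neq0.
  apply: ler_wpM2l; first by rewrite divr_ge0 ?mulr_ge0 ?ltW.
  exact: (bregman_le_smooth mu0 L0 (hg i) (hc i) (g_lip i)).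
lra.
Qed.

Lemma mean_normsq_saga_dev_le :
  mean (fun i => normsq (saga_dev i)) <= 4 * L * Dy + 2 * (2 * L - mu) * Dx.
Proof.
pose A i := g i x - g i xs; pose B i := g i (y i) - g i xs.
set Ab := vmean A; set Bb := vmean B.
pose C i := (A i - Ab) - (B i - Bb).
have devE i : saga_dev i = C i + Ab.
  rewrite /saga_dev /C /Ab /Bb /B vmeanB.
  by apply/rowP => j; rewrite !mxE; ring.
under eq_mean do rewrite devE.
rewrite mean_normsqDr //.
have -> : vmean C = 0 by rewrite /C vmeanB !vmean_sub_vmean // subr0.
rewrite dotv0l mulr0 addr0.
have C_le : mean (fun i => normsq (C i)) <=
    2 * (mean (fun i => normsq (A i)) - normsq Ab) + 2 * (mean (fun i => normsq (B i)) - normsq Bb).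
  rewrite -!mean_normsq_sub_vmean // -!meanZ -meanD.
  by apply: mean_ler => i; exact: normsqB_le.
have A_le : mean (fun i => normsq (A i)) <= 2 * L * Dx.
  rewrite -meanZ; apply: mean_ler => i.
  exact: (normsq_grad_le_bregman mu0 L0 (hg i) (hc i) (g_lip i)).
have B_le : mean (fun i => normsq (B i)) <= 2 * L * Dy.
  rewrite -meanZ; apply: mean_ler => i.
  exact: (normsq_grad_le_bregman mu0 L0 (hg i) (hc i) (g_lip i)).
(* Strong convexity forces the mean gradient difference [Ab] to be large. *)
have Ab_ge : 2 * mu * Dx <= normsq Ab.
  have : Dx + mu / 2 * normsq (x - xs) <= dotv (x - xs) Ab.
    rewrite /Dx -[mu / 2 * _](mean_cst T_gt0) -meanD -mean_dotvr; apply: mean_ler => i.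
    rewrite (dotv_grad_bregman (h i)); have := strongly_convex_bregman_ge xs x (hg i) (hc i).
    by rewrite -normsqN opprB; lra.
  move=> /(ler_wpM2l (ltW mu0)); have := dotv_young Ab (x - xs) mu.
  by rewrite dotvC; lra.
have := normsq_ge0 Bb; lra.
Qed.

End SagaNode.

Section Blocks.
Variables (R : realType) (N p : nat).
Implicit Types (x y : 'rV[R]_(N * p)).

Lemma blk_stack (b : 'I_N -> 'rV[R]_p) n : blk (stack b) n = b n.
Proof. by apply/rowP => k; rewrite !mxE mxtens_indexK. Qed.

Lemma blkB x y n : blk (x - y) n = blk x n - blk y n.
Proof. by apply/rowP => k; rewrite !mxE. Qed.

Lemma dotv_blk x y : dotv x y = \sum_n dotv (blk x n) (blk y n).
Proof.
rewrite dotvE (reindex (@mxtens_index N p)) /=; last first.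
  by exists (@mxtens_unindex N p) => a _; rewrite (mxtens_indexK, mxtens_unindexK).
under [RHS]eq_bigr do rewrite dotvE.
by rewrite pair_big /=; apply: eq_bigr => -[n k] _; rewrite !mxE.
Qed.

Lemma stack_cst_mul_tens (W : 'M[R]_N) (z : 'rV[R]_p) :
  (forall n, \sum_m W m n = 1) -> stack (fun=> z) *m (W *t 1%:M) = stack (fun=> z).
Proof.
move=> W1; apply/rowP => a; case: (mxtens_indexP a) => n k.
rewrite [RHS]mxE mxtens_indexK [LHS]mxE (reindex (@mxtens_index N p)) /=; last first.
  by exists (@mxtens_unindex N p) => b _; rewrite (mxtens_indexK, mxtens_unindexK).
transitivity (\sum_m \sum_l z 0 l * (W m n * (1%:M : 'M[R]_p) l k)).
  by rewrite pair_big /=; apply: eq_bigr => -[m l] _; rewrite tensmxE !mxE mxtens_indexK.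
rewrite -[RHS]mulr1 -[X in _ = _ * X](W1 n) mulr_sumr; apply: eq_bigr => m _.
rewrite (bigD1 k) //= big1 ?addr0 => [|l lk]; rewrite !mxE.
  by rewrite eqxx mulr1 mulrC.
by rewrite (negbTE lk) !mulr0.
Qed.

Lemma sum_col_eq1 (W : 'M[R]_N) : W^T = W -> nullsp (1%:M - W) (const_mx 1) ->
  forall n, \sum_m W m n = 1.
Proof.
move=> WT; rewrite /nullsp mulmxBl mul1mx => /matrixP null1 n.
have := null1 n 0; rewrite !mxE => /eqP; rewrite subr_eq0 => /eqP ->.
by apply: eq_bigr => m _; rewrite -[in LHS]WT !mxE mulr1.
Qed.

Lemma mulmx_sqrt_eq0 (U Zt Z : 'M[R]_(N * p)) x : U^T = U -> U *m U = Zt - Z ->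
  x *m Zt = x -> x *m Z = x -> x *m U = 0.
Proof.
move=> UT UU xZt xZ; apply: normsq_eq0.
by rewrite (normsq_mulmx_sqrt _ UT UU) qformB /qform xZt xZ subrr.
Qed.

End Blocks.

Section UniformDraw.
Variables (R : realType) (N : nat) (q : 'I_N -> nat).
Hypothesis q_gt0 : forall n, (0 < q n)%N.

Lemma card_choice_gt0 : (0 < #|choice_t q|)%N.
Proof. by apply/card_gt0P; exists [ffun n => Ordinal (q_gt0 n)]. Qed.

Definition shift_ord m k (j : 'I_(q m)) : 'I_(q m) := Ordinal (ltn_pmod (j + k) (q_gt0 m)).

Lemma shift_ord_inj m k : injective (@shift_ord m k).
Proof.
move=> j j' /(congr1 val) /eqP; rewrite /= eqn_modDr => /eqP.
by rewrite !modn_small // => /val_inj.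
Qed.

Lemma shift_ord_inj_offset m (j : 'I_(q m)) : injective (fun k : 'I_(q m) => shift_ord k j).
Proof.
move=> k k' /(congr1 val) /eqP; rewrite /= !(addnC j) eqn_modDr => /eqP.
by rewrite !modn_small // => /val_inj.
Qed.

Definition shift_choice n0 k (c : choice_t q) : choice_t q :=
  [ffun m => if m == n0 then shift_ord k (c m) else c m].

Lemma shift_choice_inj n0 k : injective (shift_choice n0 k).
Proof.
move=> c c' /ffunP cc'; apply/ffunP => m; have := cc' m.
by rewrite !ffunE; case: (m == n0) => //; exact: shift_ord_inj.
Qed.

(* Averaging over all cyclic shifts of the [n0]-th coordinate shows that the
   [n0]-th coordinate of a uniform draw is uniform. *)
Lemma mean_coord n0 (F : 'I_(q n0) -> R) : mean (fun c : choice_t q => F (c n0)) = mean F.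
Proof.
have shiftE (k : 'I_(q n0)) :
    \sum_(c : choice_t q) F (c n0) = \sum_(c : choice_t q) F (shift_ord k (c n0)).
  rewrite (reindex_inj (@shift_choice_inj n0 k)) /=.
  by apply: eq_bigr => c _; rewrite ffunE eqxx.
have : (q n0)%:R * \sum_(c : choice_t q) F (c n0) = #|choice_t q|%:R * \sum_i F i.
  rewrite -[in LHS](card_ord (q n0)) mulr_natl -sumr_const.
  rewrite (eq_bigr _ (fun k _ => shiftE k)) exchange_big /=.
  rewrite (eq_bigr (fun _ => \sum_i F i)); last first.
    by move=> c _; rewrite [RHS](reindex_inj (@shift_ord_inj_offset n0 (c n0))).
  by rewrite sumr_const mulr_natl.
have qn0 : (q n0)%:R != 0 :> R by rewrite pnatr_eq0 -lt0n.
rewrite /mean card_ord => sumE; apply: (mulfI qn0).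
by rewrite mulrCA sumE mulKf ?mulVKf ?card_neq0 ?card_choice_gt0.
Qed.

Lemma mean_sum_coord (h : forall n : 'I_N, 'I_(q n) -> R) :
  mean (fun c : choice_t q => \sum_n h n (c n)) = \sum_n mean (h n).
Proof.
rewrite /mean exchange_big mulr_sumr; apply: eq_bigr => n _.
exact: mean_coord.
Qed.

End UniformDraw.

Section Iterates.
Variables (R : realType) (N p : nat) (q : 'I_N -> nat).
Variable gf : forall n : 'I_N, 'I_(q n) -> 'rV[R]_p -> 'rV[R]_p.
Variables (W Wt : 'M[R]_N) (alpha : R) (x0 : 'rV[R]_(N * p)).

Local Notation dsa := (dsa gf W Wt alpha x0).
Local Notation x := (dsa_x gf W Wt alpha x0).
Local Notation y := (dsa_y gf W Wt alpha x0).
Local Notation Z := (Zmat p W).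
Local Notation Zt := (Ztmat p Wt).

Lemma dsa_eq_prefix (w w' : nat -> choice_t q) t :
  (forall s, (s < t)%N -> w s = w' s) -> dsa w t = dsa w' t.
Proof. by elim: t => [//|t IH] ww' /=; rewrite IH ?ww' // => s /ltnW; exact: ww'. Qed.

(* The two-step recursion of DSA, telescoped into the primal-dual form with
   the dual variable [sum_(s <= t) x^s (Zt - Z)]. *)
Lemma dsa_x_succ w t : x w t.+1 =
  x w t *m Zt - (\sum_(s < t.+1) x w s) *m (Zt - Z) - alpha *: ghat gf (y w t) (x w t) (w t).
Proof.
elim: t => [|t IH].
  by rewrite big_ord1 mulmxBr opprB addrA addrAC subrr add0r.
rewrite big_ord_recr /= mulmxDl.
have -> : x w t.+2 = x w t.+1 *m (1%:M + Z) - x w t *m Zt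
    - alpha *: (ghat gf (y w t.+1) (x w t.+1) (w t.+1) - ghat gf (y w t) (x w t) (w t)).
  by [].
move: IH; rewrite mulmxDr mulmx1 !mulmxBr scalerBr.
move=> {1}->.
set a := x w t.+1 *m Z; set b := x w t.+1 *m Zt; set c := x w t *m Zt.
set d := _ *m Zt; set e := _ *m Z; set G0 := alpha *: _; set G1 := alpha *: _.
clearbody a b c d e G0 G1.
by apply/rowP => j; rewrite !mxE; ring.
Qed.

Variables (omega : nat -> choice_t q) (t : nat).

Definition resample (c : choice_t q) (s : nat) := if s == t then c else omega s.

Lemma condE_resample (X : (nat -> choice_t q) -> R) :
  condE t X omega = mean (fun c => X (resample c)).
Proof. by []. Qed.

Lemma dsa_resample c s : (s <= t)%N -> dsa (resample c) s = dsa omega s.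
Proof.
move=> st; apply: dsa_eq_prefix => s' s's.
by rewrite /resample ifN // neq_ltn (leq_trans s's st).
Qed.

Lemma dsa_x_resample c s : (s <= t)%N -> x (resample c) s = x omega s.
Proof. by move=> st; rewrite /dsa_x dsa_resample. Qed.

Variable U : 'M[R]_(N * p).
Hypothesis UU : U *m U = Zt - Z.

Local Notation v := (dsa_v gf W Wt alpha x0 U).

Definition dsa_next c :=
  x omega t *m Zt - v omega t *m U - alpha *: ghat gf (y omega t) (x omega t) c.

Lemma dsa_v_resample c : v (resample c) t = v omega t.
Proof. by apply: eq_bigr => s _; rewrite dsa_x_resample // -ltnS. Qed.

Lemma dsa_x_resample_succ c : x (resample c) t.+1 = dsa_next c.
Proof.
rewrite dsa_x_succ /dsa_next /dsa_v -UU -mulmx_suml -mulmxA.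
rewrite (eq_bigr (fun s : 'I_t.+1 => x omega s)) => [|s _]; last first.
  by rewrite dsa_x_resample // -ltnS.
by rewrite dsa_x_resample // /dsa_y dsa_resample // /resample eqxx.
Qed.

Lemma dsa_v_resample_succ c : v (resample c) t.+1 = v omega t + dsa_next c *m U.
Proof.
rewrite /dsa_v big_ord_recr /= -dsa_x_resample_succ; congr (_ + _).
exact: dsa_v_resample.
Qed.

End Iterates.

Lemma qform_Gmat (R : realType) k (Zt : 'M[R]_k) (x v x' v' : 'rV[R]_k) :
  qform (Gmat Zt) (uvec x v - uvec x' v') = qform Zt (x - x') + normsq (v - v').
Proof.
rewrite /uvec opp_row_mx add_row_mx /qform /Gmat mul_row_block !mulmx0 addr0 add0r mulmx1.
by rewrite tr_row_mx mul_row_col mxE.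
Qed.

Section PrimalDualStep.
Variables (R : realType) (k : nat) (Zt Z U : 'M[R]_k) (alpha eta : R).
Hypotheses (ZtT : Zt^T = Zt) (UT : U^T = U) (UU : U *m U = Zt - Z)
  (alpha0 : 0 < alpha) (eta0 : 0 < eta).
Variables (xs vs gs : 'rV[R]_k).
Hypotheses (xsZt : xs *m Zt = xs) (xsU : xs *m U = 0) (optimality : alpha *: gs = - (vs *m U)).

Lemma primal_dual_step_le (x v g x' : 'rV[R]_k) :
  x' = x *m Zt - v *m U - alpha *: g ->
  qform (Gmat Zt) (uvec x' (v + x' *m U) - uvec xs vs)
  <= qform (Gmat Zt) (uvec x v - uvec xs vs)
     - 2 * qform (1%:M + Z - 2%:R *: Zt) (x' - xs)
     - qform (Zt - (2%:R * alpha * eta) *: 1%:M) (x' - x)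
     - qform 1%:M (x' *m U)
     + alpha / eta * normsq (g - gs) - 2 * alpha * dotv (x - xs) (g - gs).
Proof.
move=> x'E; rewrite !qform_Gmat qform1.
set a := x' - xs; set e := x - xs; set d := x' - x; set w := v - vs; set r := g - gs.
have dE : d = a - e by rewrite /d /a /e opprB addrA subrK.
have aU : x' *m U = a *m U by rewrite /a mulmxBl xsU subr0.
have wE : v + x' *m U - vs = w + a *m U by rewrite aU /w addrAC.
have alpha_r : alpha *: r = e *m Zt - a - w *m U.
  rewrite /r scalerBr optimality /e /a /w !mulmxBl xsZt x'E.
  move: (x *m Zt) (v *m U) (vs *m U) (alpha *: g) => P Q S T.
  by apply/rowP => j; rewrite !mxE; ring.
rewrite wE aU; clearbody a e d w r.
have aUsq : normsq (a *m U) = qform Zt a - qform Z a.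
  by rewrite (normsq_mulmx_sqrt _ UT UU) qformB.
have dZt : qform Zt d = qform Zt a - 2 * dotv (a *m Zt) e + qform Zt e.
  by rewrite dE qform_subr.
have a_r : alpha * dotv a r = dotv (a *m Zt) e - normsq a - dotv w (a *m U).
  rewrite -dotvZr alpha_r !dotvBr (dotvC a (e *m Zt)) (dotv_mulmx_sym e a ZtT).
  by rewrite (dotvC a (w *m U)) [dotv w _]dotv_mulmxr UT.
have a_de : dotv a r = dotv d r + dotv e r by rewrite dE dotvBl addrNK.
(* The gradient error is absorbed by completing the square [|r + eta d|^2 >= 0]. *)
have square : 0 <= alpha / eta * normsq r + 2 * alpha * dotv d r + alpha * eta * normsq d.
  have := normsq_ge0 (r + eta *: d); rewrite normsqD normsqZ dotvZr dotvC => sq0.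
  have -> : alpha / eta * normsq r + 2 * alpha * dotv d r + alpha * eta * normsq d
      = alpha / eta * (normsq r + 2 * (eta * dotv d r) + eta ^+ 2 * normsq d).
    by field; rewrite lt0r_neq0.
  by rewrite mulr_ge0 // divr_ge0 // ltW.
have := mulr_ge0 (mulr_ge0 (ltW alpha0) (ltW eta0)) (normsq_ge0 d).
rewrite normsqD aUsq !qformB qformD !qformZ !qform1 dZt; rewrite a_de in a_r.
rewrite /qform in a_r dZt aUsq *; lra.
Qed.

End PrimalDualStep.

Section NetworkGradientError.
(* Otherwise the node index of [f], [gf], [y] and of the hypotheses would be
   made implicit. *)
Local Unset Implicit Arguments.
Variables (R : realType) (N p : nat) (q : 'I_N -> nat).
Hypothesis q_gt0 : forall n, (0 < q n)%N.
Variables (f : forall n : 'I_N, 'I_(q n) -> 'rV[R]_p -> R)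
  (gf : forall n : 'I_N, 'I_(q n) -> 'rV[R]_p -> 'rV[R]_p) (mu L : R).
Hypotheses (mu0 : 0 < mu) (L0 : 0 < L) (hg : forall n i, is_gradient (f n i) (gf n i))
  (hc : forall n i, eucl_strongly_convex mu (f n i))
  (g_lip : forall n i, eucl_lipschitz L (gf n i)).
Variables (xs : 'rV[R]_p) (y : table R p q) (x : 'rV[R]_(N * p)).

Let xstar : 'rV[R]_(N * p) := stack (fun=> xs).
Let gs := gradF_glob gf xstar.
Let Dx := F_glob f x - F_glob f xstar - dotv gs (x - xstar).

Lemma blk_ghat_sub c n :
  blk (ghat gf y x c - gs) n = saga_dev (gf n) (blk x n) xs (y n) (c n).
Proof. by rewrite blkB /ghat /gs /gradF_glob !blk_stack /saga_dev /vmean !card_ord. Qed.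

Lemma bregman_F_glob :
  Dx = \sum_n mean (fun i => bregman (f n i) (gf n i) (blk x n) xs).
Proof.
rewrite /Dx /F_glob dotv_blk -!sumrB; apply: eq_bigr => n _.
rewrite /f_loc blk_stack /gs /gradF_glob blk_stack blk_stack blkB blk_stack.
by rewrite dotvZl dotv_suml /mean card_ord -!mulrBr -!sumrB.
Qed.

Lemma pterm_bregman :
  pterm f gf y xs = \sum_n mean (fun i => bregman (f n i) (gf n i) (y n i) xs).
Proof. by apply: eq_bigr => n _; rewrite /mean card_ord. Qed.

Lemma mean_dotv_ghat_ge :
  2 * mu / L * Dx <= mean (fun c => dotv (x - xstar) (ghat gf y x c - gs)).
Proof.
under eq_mean do rewrite dotv_blk.
under eq_mean do under eq_bigr do rewrite blk_ghat_sub blkB blk_stack.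
rewrite (mean_sum_coord q_gt0
  (fun n j => dotv (blk x n - xs) (saga_dev (gf n) (blk x n) xs (y n) j))).
rewrite bregman_F_glob mulr_sumr; apply: ler_sum => n _.
have qn : (0 < #|'I_(q n)|)%N by rewrite card_ord.
exact: (mean_dotv_saga_dev_ge qn mu0 L0 (hg n) (hc n) (g_lip n) (blk x n) xs (y n)).
Qed.

Lemma mean_normsq_ghat_le :
  mean (fun c => normsq (ghat gf y x c - gs))
  <= 4 * L * pterm f gf y xs + 2 * (2 * L - mu) * Dx.
Proof.
under eq_mean do rewrite /normsq dotv_blk.
under eq_mean do under eq_bigr do rewrite blk_ghat_sub.
rewrite (mean_sum_coord q_gt0 (fun n j => normsq (saga_dev (gf n) (blk x n) xs (y n) j))).
rewrite bregman_F_glob pterm_bregman !mulr_sumr -big_split.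
apply: ler_sum => n _; have qn : (0 < #|'I_(q n)|)%N by rewrite card_ord.
exact: (mean_normsq_saga_dev_le qn mu0 L0 (hg n) (hc n) (g_lip n) (blk x n) xs (y n)).
Qed.

Lemma mean_ghat_error_le alpha eta : 0 < alpha -> 0 < eta ->
  alpha / eta * mean (fun c => normsq (ghat gf y x c - gs))
  - 2 * alpha * mean (fun c => dotv (x - xstar) (ghat gf y x c - gs))
  <= 4 * alpha * L / eta * pterm f gf y xs
     - (4 * alpha * mu / L - 2 * alpha * (2 * L - mu) / eta) * Dx.
Proof.
move=> alpha0 eta0.
have := ler_wpM2l (divr_ge0 (ltW alpha0) (ltW eta0)) mean_normsq_ghat_le.
have := ler_wpM2l (mulr_ge0 (ler0n _ 2) (ltW alpha0)) mean_dotv_ghat_ge.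
have -> : 4 * alpha * L / eta * pterm f gf y xs
      - (4 * alpha * mu / L - 2 * alpha * (2 * L - mu) / eta) * Dx
    = alpha / eta * (4 * L * pterm f gf y xs + 2 * (2 * L - mu) * Dx)
      - 2 * alpha * (2 * mu / L * Dx).
  by field; rewrite !lt0r_neq0.
lra.
Qed.

End NetworkGradientError.

Section ConditionalDescent.
Local Unset Implicit Arguments.
Variables (R : realType) (N p : nat) (q : 'I_N -> nat).
Hypothesis q_gt0 : forall n, (0 < q n)%N.
Variables (f : forall n : 'I_N, 'I_(q n) -> 'rV[R]_p -> R)
  (gf : forall n : 'I_N, 'I_(q n) -> 'rV[R]_p -> 'rV[R]_p) (mu L : R).
Hypotheses (mu0 : 0 < mu) (L0 : 0 < L) (hg : forall n i, is_gradient (f n i) (gf n i))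
  (hc : forall n i, eucl_strongly_convex mu (f n i))
  (g_lip : forall n i, eucl_lipschitz L (gf n i)).
Variables (W Wt : 'M[R]_N) (U : 'M[R]_(N * p)) (alpha eta : R) (x0 : 'rV[R]_(N * p)).
Variables (xs : 'rV[R]_p) (vs : 'rV[R]_(N * p)).

Local Notation xstar := (stack (fun=> xs) : 'rV[R]_(N * p)).
Local Notation gs := (gradF_glob gf xstar).
Local Notation Z := (Zmat p W).
Local Notation Zt := (Ztmat p Wt).
Local Notation x := (dsa_x gf W Wt alpha x0).
Local Notation y := (dsa_y gf W Wt alpha x0).
Local Notation v := (dsa_v gf W Wt alpha x0 U).

Hypotheses (ZtT : Zt^T = Zt) (UT : U^T = U) (UU : U *m U = Zt - Z)
  (alpha0 : 0 < alpha) (eta0 : 0 < eta) (xsZt : xstar *m Zt = xstar) (xsU : xstar *m U = 0)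
  (optimality : alpha *: gs = - (vs *m U)).
Variables (omega : nat -> choice_t q) (t : nat).

Local Notation rs := (resample omega t).
Local Notation G := (Gmat Zt).
Local Notation ustar := (uvec xstar vs).

Lemma dsa_resample_step_le c :
  qform G (uvec (x (rs c) t.+1) (v (rs c) t.+1) - ustar)
  <= qform G (uvec (x omega t) (v omega t) - ustar)
     - 2 * qform (1%:M + Z - 2%:R *: Zt) (x (rs c) t.+1 - xstar)
     - qform (Zt - (2%:R * alpha * eta) *: 1%:M) (x (rs c) t.+1 - x (rs c) t)
     - qform 1%:M (v (rs c) t.+1 - v (rs c) t)
     + alpha / eta * normsq (ghat gf (y omega t) (x omega t) c - gs)
     - 2 * alpha * dotv (x omega t - xstar) (ghat gf (y omega t) (x omega t) c - gs).
Proof.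
rewrite (dsa_x_resample_succ _ _ _ _ _ UU) (dsa_v_resample_succ _ _ _ _ _ UU).
rewrite dsa_x_resample // dsa_v_resample [_ + _ - v omega t]addrC addKr.
by apply: (primal_dual_step_le ZtT UT UU alpha0 eta0 xsZt xsU optimality
  (x := x omega t) (v := v omega t) (g := ghat gf (y omega t) (x omega t) c)).
Qed.

Lemma dsa_conditional_descent :
  condE t (fun w => qform G (uvec (x w t.+1) (v w t.+1) - ustar)) omega
  <= qform G (uvec (x omega t) (v omega t) - ustar)
     - 2 * condE t (fun w => qform (1%:M + Z - 2%:R *: Zt) (x w t.+1 - xstar)) omega
     + 4%:R * alpha * L / eta * pterm f gf (y omega t) xs
     - condE t (fun w => qform (Zt - (2%:R * alpha * eta) *: 1%:M) (x w t.+1 - x w t)) omega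
     - condE t (fun w => qform 1%:M (v w t.+1 - v w t)) omega
     - (4%:R * alpha * mu / L - 2%:R * alpha * (2%:R * L - mu) / eta)
       * (F_glob f (x omega t) - F_glob f xstar - dotv gs (x omega t - xstar)).
Proof.
have step := mean_ler dsa_resample_step_le.
rewrite !(meanB, meanD, meanZ) mean_cst ?card_choice_gt0 // in step.
have := mean_ghat_error_le R N p q q_gt0 f gf mu L mu0 L0 hg hc g_lip xs (y omega t) (x omega t)
  alpha eta alpha0 eta0.
rewrite !condE_resample; lra.
Qed.

End ConditionalDescent.

Theorem lemma4 (R : realType) (N p : nat) (q : 'I_N -> nat)
  (edge : rel 'I_N)
  (f : forall n : 'I_N, 'I_(q n) -> 'rV[R]_p -> R)
  (gf : forall n : 'I_N, 'I_(q n) -> 'rV[R]_p -> 'rV[R]_p)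
  (mu L : R) (W Wt : 'M[R]_N) (U : 'M[R]_(N * p))
  (alpha eta : R) (x0 : 'rV[R]_(N * p))
  (xs : 'rV[R]_p) (vstar : 'rV[R]_(N * p)) :
  (* the network: a connected undirected graph *)
  irreflexive edge -> symmetric edge -> (forall n m, connect edge n m) ->
  (* every node holds at least one function *)
  (forall n, (0 < q n)%N) ->
  (* f_{n,i} differentiable, mu-strongly convex, L-Lipschitz gradient *)
  0 < mu -> 0 < L ->
  (forall n i, is_gradient (f n i) (gf n i)) ->
  (forall n i, eucl_strongly_convex mu (f n i)) ->
  (forall n i, eucl_lipschitz L (gf n i)) ->
  (* sparsity pattern of the weights *)
  (forall n m, W n m != 0 -> n = m \/ edge n m) ->
  (forall n m, Wt n m != 0 -> n = m \/ edge n m) ->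
  (* (a) symmetry *)
  W^T = W -> Wt^T = Wt ->
  (* (b) null spaces *)
  (forall z, spanOne z -> nullsp (1%:M - Wt) z) ->
  (forall z, nullsp (1%:M - W) z <-> spanOne z) ->
  (forall z, nullsp (Wt - W) z <-> spanOne z) ->
  (* (c) W <= Wt <= (I + W)/2, Wt > 0 *)
  psd_le W Wt -> psd_le Wt (2%:R^-1 *: (1%:M + W)) -> pos_def Wt ->
  (* U = (Zt - Z)^{1/2}: the symmetric positive semidefinite square root *)
  U^T = U -> (forall z, 0 <= qform U z) -> U *m U = Ztmat p Wt - Zmat p W ->
  0 < alpha -> 0 < eta ->
  (* xs is the minimizer of sum_n f_n *)
  (forall z, \sum_(n < N) f_loc f n xs <= \sum_(n < N) f_loc f n z) ->
  (* vstar lies in the column space of U and alpha grad f(xstar) + U vstar = 0 *)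
  (exists w, vstar = w *m U) ->
  alpha *: gradF_glob gf (stack (fun _ => xs)) + vstar *m U = 0 ->
  let xstar := stack (fun _ : 'I_N => xs) in
  let Z := Zmat p W in
  let Zt := Ztmat p Wt in
  let G := Gmat Zt in
  let x := dsa_x gf W Wt alpha x0 in
  let v := dsa_v gf W Wt alpha x0 U in
  let ustar := uvec xstar vstar in
  forall (omega : nat -> choice_t q) (t : nat),
    condE t (fun w => qform G (uvec (x w t.+1) (v w t.+1) - ustar)) omega
    <= qform G (uvec (x omega t) (v omega t) - ustar)
       - 2 * condE t (fun w => qform (1%:M + Z - 2%:R *: Zt) (x w t.+1 - xstar)) omega
       + 4%:R * alpha * L / eta * pterm f gf (dsa_y gf W Wt alpha x0 omega t) xs
       - condE t (fun w => qform (Zt - (2%:R * alpha * eta) *: 1%:M) (x w t.+1 - x w t)) omega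
       - condE t (fun w => qform 1%:M (v w t.+1 - v w t)) omega
       - (4%:R * alpha * mu / L - 2%:R * alpha * (2%:R * L - mu) / eta)
         * (F_glob f (x omega t) - F_glob f xstar
            - dotv (gradF_glob gf xstar) (x omega t - xstar)).
Proof.
move=> _ _ _ q_gt0 mu0 L0 hg hc g_lip _ _ WT WtT Wt1 W1 _ _ _ _ UT _ UU alpha0 eta0 _ _ opt.
move=> xstar Z Zt G x v ustar omega t.
have span1 : spanOne (const_mx 1 : 'cV[R]_N) by exists 1; rewrite scale1r.
have xsZ : xstar *m Z = xstar.
  by apply/stack_cst_mul_tens/sum_col_eq1 => //; apply/W1.
have xsZt : xstar *m Zt = xstar.
  by apply/stack_cst_mul_tens/sum_col_eq1 => //; apply/Wt1.
have ZtT : Zt^T = Zt by rewrite trmx_tens WtT trmx1.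
have xsU := mulmx_sqrt_eq0 UT UU xsZt xsZ.
have optimality : alpha *: gradF_glob gf xstar = - (vstar *m U).
  by apply/eqP; rewrite -addr_eq0 opt.
exact: (dsa_conditional_descent R N p q q_gt0 f gf mu L mu0 L0 hg hc g_lip W Wt U alpha eta x0
  xs vstar ZtT UT UU alpha0 eta0 xsZt xsU optimality omega t).
Qed.
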